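(* Let $\beta\in(0,\tfrac12)$. Then $\mathcal{A}_\beta\ne\emptyset$; consequently $\lambda_1(\beta)=\sup\mathcal{A}_\beta$ is well-defined and strictly positive.
   Context: Tree: for an integer $m\ge2$, $\mathbb{T}_m$ has vertices the root $\emptyset$ and all finite sequences $(\emptyset,a_1,\dots,a_k)$, $a_i\in\{0,\dots,m-1\}$; $|x|$ is the level, successors of $x$ are $(x,i)$, $\hat x$ is the immediate predecessor of $x\ne\emptyset$. Operator: $p_\beta=\beta/(1-\beta)$ for $\beta\in(0,1)$. $\Delta_\beta u(\emptyset)=\frac1m\sum_{i=0}^{m-1}u(\emptyset,i)-u(\emptyset)$ and, for $x\ne\emptyset$, $\Delta_\beta u(x)=\big(\beta u(\hat x)+\frac{1-\beta}{m}\sum_{i=0}^{m-1}u(x,i)-u(x)\big)p_\beta^{-|x|}$. $\mathcal{A}_\beta=\{\lambda>0:\exists v:\mathbb{T}_m\to\mathbb{R}\text{ and constants }0<c<C\text{ with } c<v<C \text{ and } \Delta_\beta v+\lambda v\le0 \text{ on }\mathbb{T}_m\}$, $\lambda_1(\beta)=\sup\mathcal{A}_\beta$. *)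

From Stdlib Require Import Reals Lra List.
From Coquelicot Require Import Coquelicot.
Open Scope R_scope.

(* Vertices of T_m: a vertex (root, a_1, ..., a_k) is encoded as the list
   [a_k; ...; a_1] (most recent symbol first).  The root is [nil];
   the successor (x,i) is [i :: x]; the predecessor of [a :: x] is [x];
   the level |x| is [length x]. *)
Definition vertex (m : nat) (x : list nat) : Prop := List.Forall (fun a : nat => lt a m) x.

Fixpoint sumto (n : nat) (f : nat -> R) : R :=
  match n with O => 0 | S k => sumto k f + f k end.

Definition p_beta (beta : R) : R := beta / (1 - beta).

Definition Delta (m : nat) (beta : R) (u : list nat -> R) (x : list nat) : R :=
  match x with
  | nil => / INR m * sumto m (fun i => u (i :: nil)) - u nil
  | _ :: xhat =>
      (beta * u xhat + (1 - beta) / INR m * sumto m (fun i => u (i :: x)) - u x)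
        / (p_beta beta ^ length x)
  end.

Definition A_beta (m : nat) (beta : R) (lam : R) : Prop :=
  0 < lam /\
  exists (v : list nat -> R) (c C : R),
    0 < c /\ c < C /\
    (forall x, vertex m x -> c < v x /\ v x < C) /\
    (forall x, vertex m x -> Delta m beta v x + lam * v x <= 0).

Definition lambda1 (m : nat) (beta : R) : Rbar := Lub_Rbar (A_beta m beta).

(** The radial function [v x = 1 + (2 beta)^|x|] is a bounded positive
    supersolution.  Off the root, the three-term recursion gives
    [beta t^(k-1) + (1-beta) t^(k+1) - t^k = - beta (1 - 2 beta)^2 t^(k-1)]
    for [t = 2 beta], and since [p_beta <= 2 beta] the weight [p_beta^-k]
    only makes this more negative, so [Delta v <= -(1 - 2 beta)^2 / 2]
    everywhere; as [v <= 2], any [lam <= (1 - 2 beta)^2 / 4] is admissible. *)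
From Pilot Require Import Defs.
From Stdlib Require Import Reals Lra Lia.
From Coquelicot Require Import Coquelicot.
Open Scope R_scope.

Lemma sumto_const (n : nat) (c : R) : sumto n (fun _ => c) = INR n * c.
Proof.
  induction n as [|n IH]; simpl sumto.
  - simpl; ring.
  - rewrite IH, S_INR; ring.
Qed.

Definition radial (f : nat -> R) (x : list nat) : R := f (length x).

(* Coquelicot also exports a [Delta], hence the qualified [Defs.Delta] below. *)
Section RadialLaplacian.

Variables (m : nat) (beta : R) (f : nat -> R).
Hypothesis m_neq0 : m <> 0%nat.

Let INR_m_neq0 : INR m <> 0.
Proof. now apply not_0_INR. Qed.

Lemma Delta_radial_nil : Defs.Delta m beta (radial f) nil = f 1%nat - f 0%nat.
Proof.
  unfold Defs.Delta, radial; simpl length.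
  rewrite sumto_const; field; exact INR_m_neq0.
Qed.

Lemma Delta_radial_cons (a : nat) (x : list nat) :
  Defs.Delta m beta (radial f) (a :: x) =
  (beta * f (length x) + (1 - beta) * f (S (S (length x))) - f (S (length x)))
    / p_beta beta ^ S (length x).
Proof.
  unfold Defs.Delta, radial; simpl length.
  rewrite sumto_const; f_equal; field; exact INR_m_neq0.
Qed.

End RadialLaplacian.

Lemma p_beta_pos (beta : R) : 0 < beta < 1 -> 0 < p_beta beta.
Proof. intros Hb; unfold p_beta; apply Rdiv_lt_0_compat; lra. Qed.

Lemma p_beta_le_twice (beta : R) : 0 < beta <= 1 / 2 -> p_beta beta <= 2 * beta.
Proof.
  intros Hb; unfold p_beta.
  apply Rmult_le_reg_r with (1 - beta); [lra|].
  unfold Rdiv; rewrite Rmult_assoc, Rinv_l by lra; nra.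
Qed.

Definition supersolution (beta : R) : list nat -> R :=
  radial (fun k => 1 + (2 * beta) ^ k).

Lemma supersolution_bounds (beta : R) (x : list nat) :
  0 < beta <= 1 / 2 -> 1 < supersolution beta x <= 2.
Proof.
  intros Hb; unfold supersolution, radial.
  assert (0 < (2 * beta) ^ length x) by (apply pow_lt; lra).
  assert ((2 * beta) ^ length x <= 1).
  { rewrite <- (pow1 (length x)); apply pow_incr; lra. }
  lra.
Qed.

Lemma Delta_supersolution_le (m : nat) (beta : R) (x : list nat) :
  m <> 0%nat -> 0 < beta < 1 / 2 ->
  Defs.Delta m beta (supersolution beta) x <= - (1 - 2 * beta) ^ 2 / 2.
Proof.
  intros Hm Hb; unfold supersolution.
  destruct x as [|a x].
  - rewrite Delta_radial_nil by exact Hm; simpl; nra.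
  - rewrite Delta_radial_cons by exact Hm.
    set (j := length x); set (p := p_beta beta).
    assert (Hp : 0 < p) by (apply p_beta_pos; lra).
    assert (Hpj : 0 < p ^ S j) by (apply pow_lt; lra).
    assert (Hratio : 1 <= (2 * beta) ^ S j / p ^ S j).
    { apply Rmult_le_reg_r with (p ^ S j); [exact Hpj|].
      unfold Rdiv; rewrite Rmult_assoc, Rinv_l, Rmult_1_l, Rmult_1_r by lra.
      apply pow_incr; split; [lra|]; apply p_beta_le_twice; lra. }
    assert (Hstep : (beta * (1 + (2 * beta) ^ j) + (1 - beta) * (1 + (2 * beta) ^ S (S j))
                     - (1 + (2 * beta) ^ S j)) / p ^ S j
                    = - ((1 - 2 * beta) ^ 2 / 2) * ((2 * beta) ^ S j / p ^ S j)).
    { simpl; field; split; [apply pow_nonzero|]; lra. }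
    rewrite Hstep.
    assert (0 < (1 - 2 * beta) ^ 2) by (apply pow_lt; lra).
    nra.
Qed.

Lemma A_beta_quarter_square (m : nat) (beta : R) :
  m <> 0%nat -> 0 < beta < 1 / 2 -> A_beta m beta ((1 - 2 * beta) ^ 2 / 4).
Proof.
  intros Hm Hb.
  assert (Hsq : 0 < (1 - 2 * beta) ^ 2) by (apply pow_lt; lra).
  split; [lra|].
  exists (supersolution beta), (1 / 2), 3.
  do 2 (split; [lra|]).
  split; intros x _; pose proof (supersolution_bounds beta x) as Hv.
  - lra.
  - pose proof (Delta_supersolution_le m beta x Hm Hb); nra.
Qed.

Lemma lambda1_pos_of_A_beta (m : nat) (beta lam : R) :
  A_beta m beta lam -> Rbar_lt 0 (lambda1 m beta).
Proof.
  intros [Hlam HA].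
  unfold lambda1.
  destruct (Lub_Rbar_correct (A_beta m beta)) as [Hub _].
  specialize (Hub lam (conj Hlam HA)).
  destruct (Lub_Rbar (A_beta m beta)) as [r| |]; simpl in *; lra.
Qed.

Theorem lemma5p1 (m : nat) (beta : R) :
  (2 <= m)%nat -> 0 < beta < 1 / 2 ->
  (exists lam : R, A_beta m beta lam) /\ Rbar_lt 0 (lambda1 m beta).
Proof.
  intros Hm Hb.
  assert (HA : A_beta m beta ((1 - 2 * beta) ^ 2 / 4))
    by (apply A_beta_quarter_square; [lia | exact Hb]).
  split.
  - now exists ((1 - 2 * beta) ^ 2 / 4).
  - exact (lambda1_pos_of_A_beta m beta _ HA).
Qed.
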